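(* Let $(S,+)$ be a commutative cancellative semigroup with no identity element such that its difference group $S-S$ carries a multiplication making it an integral domain, and let $A\subseteq S$. Then $A$ is PP-rich in $S$ if and only if for every $R\in\mathcal{P}_f(\mathbb{P})$ there exist $a\in A$ and $x\in S$ such that $S_R(a,x)\subseteq A$.
   Context: $S-S=\{a-b:a,b\in S\}$ is the difference group of $S$ (with $(a-b)+b=a$), containing $S$. $\mathbb{P}$ is the set of polynomial functions $S-S\to S-S$ in one variable with coefficients in $S-S$ and zero constant term; $\mathcal{P}_f(\mathbb{P})$ is the set of its nonempty finite subsets. For $R\in\mathcal{P}_f(\mathbb{P})$ and $a,x\in S$, $S_R(a,x)=\{a+f(x): f\in R\}$. $A\subseteq S$ is PP-rich if for every $R\in\mathcal{P}_f(\mathbb{P})$ there exist $a,x\in S$ with $S_R(a,x)\subseteq A$. *)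

(* S is modelled as a subset of its own difference group D,
   which carries an integral-domain structure (D : idomainType). *)
From mathcomp Require Import all_boot all_order all_algebra.
Set Implicit Arguments. Unset Strict Implicit. Unset Printing Implicit Defensive.
Import GRing.Theory.
Local Open Scope ring_scope.

Section Defs.
Variable D : idomainType.

Definition is_diff_group_of (S : D -> Prop) : Prop :=
  [/\ (forall a b, S a -> S b -> S (a + b)),
      ~ (exists e, S e /\ forall s, S s -> e + s = s)
    & (forall d : D, exists a b, [/\ S a, S b & d = a - b])].

(* Elements of P: polynomials over D = S - S with zero constant term,
   viewed as functions x |-> p.[x]. *)
Definition zero_const (p : {poly D}) : Prop := p`_0 = 0.

(* R in P_f(P): a nonempty finite list of such polynomials. *)
Definition PfP (R : seq {poly D}) : Prop :=
  R <> [::] /\ forall p, p \in R -> zero_const p.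

Definition S_R (R : seq {poly D}) (a x : D) : D -> Prop :=
  fun y => exists2 f, f \in R & y = a + f.[x].

Definition sub_pred (B C : D -> Prop) : Prop := forall y, B y -> C y.

Definition PP_rich (S A : D -> Prop) : Prop :=
  forall R, PfP R -> exists a x, [/\ S a, S x & sub_pred (S_R R a x) A].
End Defs.

(* Adjoining the zero polynomial to R costs nothing, since it has zero
   constant term, and forces the base point a = a + 0(x) of S_R(a,x) into A.
   Conversely, A is contained in S. *)
From mathcomp Require Import all_boot all_order all_algebra.
Set Implicit Arguments. Unset Strict Implicit. Unset Printing Implicit Defensive.
Local Open Scope ring_scope.
Import GRing.Theory.

Section ZeroPolynomial.
Variable D : idomainType.

Lemma zero_const0 : zero_const (0 : {poly D}).
Proof. by rewrite /zero_const coef0. Qed.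

Lemma PfP_cons0 (R : seq {poly D}) : PfP R -> PfP (0 :: R).
Proof.
move=> [_ R0]; split=> // p; rewrite inE => /orP[/eqP -> | /R0 //].
exact: zero_const0.
Qed.

Lemma S_R_cons0_base (R : seq {poly D}) (a x : D) : S_R (0 :: R) a x a.
Proof. by exists 0; rewrite ?mem_head // horner0 addr0. Qed.

Lemma sub_S_R_cons (p : {poly D}) (R : seq {poly D}) (a x : D) :
  sub_pred (S_R R a x) (S_R (p :: R) a x).
Proof. by move=> y [f fR ->]; exists f; rewrite // inE fR orbT. Qed.

End ZeroPolynomial.

Theorem lemma5p5 (D : idomainType) (S A : D -> Prop) :
  is_diff_group_of S ->
  sub_pred A S ->
  (PP_rich S A <->
   forall R : seq {poly D}, PfP R ->
     exists a x, [/\ A a, S x & sub_pred (S_R R a x) A]).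
Proof.
move=> _ AS; split=> [rich R PR | baseA R PR].
- have [a [x [_ Sx sub0RA]]] := rich _ (PfP_cons0 PR).
  exists a, x; split=> //; first exact: sub0RA (S_R_cons0_base _ _ _).
  by move=> y /(@sub_S_R_cons _ 0)/sub0RA.
- have [a [x [Aa Sx subRA]]] := baseA R PR.
  by exists a, x; split=> //; apply: AS.
Qed.
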